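(* Let $n\geq5$ and let $Z\in\mathbb{R}^{n\times4}$ be totally positive satisfying Assumption (G). For any $i,j\in[n]$ with $\{i-1,i,i+1\}\cap\{j,j+1\}=\emptyset$ (indices mod $n$), the line $P_{(i-1)i(i+1)}\cap L_{j(j+1)}\subset\mathrm{Gr}_{\mathbb{C}}(2,4)$, consisting of lines in $\mathbb{P}^3$ contained in the plane $Z_{i-1}Z_iZ_{i+1}$ and meeting the line $Z_jZ_{j+1}$, does not intersect $\mathcal{A}_n(Z)$.
   Context: $Z$ totally positive: all $4\times4$ minors positive; its rows $Z_1,\dots,Z_n$ are points of $\mathbb{P}^3$. $\mathcal{A}_n(Z)\subset\mathrm{Gr}_{\mathbb{R}}(2,4)$ is the image of the totally nonnegative Grassmannian $\mathrm{Gr}(2,n)_{\ge0}$ under $\mathrm{rowspan}(X)\mapsto\mathrm{rowspan}(XZ)$. $\langle AB\,ij\rangle$ is the determinant of the matrix with rows $A,B,Z_i,Z_j$. Assumption (G): no line $AB$ has more than $4$ of $\langle AB\,i(i+1)\rangle$, $i\in[n]$ (cyclically, $\langle AB\,n(n+1)\rangle=\langle AB\,1n\rangle$), vanishing. *)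

From HB Require Import structures.
From mathcomp Require Import all_boot all_order all_algebra.
From mathcomp Require Export reals.
Set Implicit Arguments. Unset Strict Implicit. Unset Printing Implicit Defensive.
Import Order.TTheory GRing.Theory Num.Theory.
Local Open Scope ring_scope.

Definition incr (k n : nat) (f : 'I_k -> 'I_n) : Prop :=
  forall a b : 'I_k, (a < b)%N -> (f a < f b)%N.

Definition totally_positive (R : realType) (n : nat) (Z : 'M[R]_(n, 4)) : Prop :=
  forall f : 'I_4 -> 'I_n, incr f -> 0 < \det (rowsub f Z).

Definition Gr_nonneg (R : realType) (n : nat) (X : 'M[R]_(2, n)) : Prop :=
  \rank X = 2%N /\ forall f : 'I_2 -> 'I_n, incr f -> 0 <= \det (colsub f X).

(* <AB ij> : determinant of the 4x4 matrix with rows A, B, Z_i, Z_j (W has rows A, B) *)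
Definition br (R : realType) (n : nat) (Z : 'M[R]_(n, 4)) (W : 'M[R]_(2, 4))
  (i j : 'I_n) : R :=
  \det (col_mx W (col_mx (row i Z) (row j Z))).

Definition assumptionG (R : realType) (n : nat) (Z : 'M[R]_(n, 4)) : Prop :=
  forall W : 'M[R]_(2, 4), \rank W = 2%N ->
    (#|[set i : 'I_n | br Z W i (ordS i) == 0%R]| <= 4)%N.

Definition in_amplituhedron (R : realType) (n : nat) (Z : 'M[R]_(n, 4))
  (W : 'M[R]_(2, 4)) : Prop :=
  \rank W = 2%N /\ exists X : 'M[R]_(2, n), Gr_nonneg X /\ (W == X *m Z)%MS.

Definition plane3 (R : realType) (n : nat) (Z : 'M[R]_(n, 4)) (i : 'I_n) : 'M[R]_(3, 4) :=
  col_mx (row (ord_pred i) Z) (col_mx (row i Z) (row (ordS i) Z)).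

Definition line2 (R : realType) (n : nat) (Z : 'M[R]_(n, 4)) (j : 'I_n) : 'M[R]_(2, 4) :=
  col_mx (row j Z) (row (ordS j) Z).

(* Write W = rowspan (X Z) with X totally nonnegative. Expanding the bracket
   bilinearly gives 2 <XZ c d> = sum_(a,b) p_ab(X) <a b c d>, with p_ab the
   Pluecker coordinates of X. By total positivity the minors <a b k k+1>,
   a < b outside {k, k+1}, all have the same strict sign, so <XZ k k+1> = 0
   forces every pair a < b with p_ab <> 0 to meet {k, k+1}. The brackets
   <W i-1 i>, <W i i+1> and <W j j+1> vanish, hence each such pair is {i, x}
   with x outside {i-1, i+1}. On these pairs <a b i-1 i+1> again has a constant
   strict sign, and <W i-1 i+1> = 0 then kills every p_ab, contradicting
   rank X = 2. *)

From HB Require Import structures.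
From mathcomp Require Import all_boot all_order all_algebra all_fingroup reals.
From mathcomp Require Import zify.
Import Order.TTheory GRing.Theory Num.Theory.
Local Open Scope ring_scope.
Set Implicit Arguments. Unset Strict Implicit. Unset Printing Implicit Defensive.

Section RowFamilyDeterminant.
Variables (R : comPzRingType) (m : nat).
Implicit Types (g : 'I_m -> 'rV[R]_m).

Lemma det_rows_perm g (s : 'S_m) :
  \det (\matrix_r g (s r)) = (-1) ^+ s * \det (\matrix_r g r).
Proof.
have -> : \matrix_r g (s r) = row_perm s (\matrix_r g r).
  by apply/matrixP => r c; rewrite !mxE.
by rewrite row_permE det_mulmx det_perm.
Qed.

Lemma det_rows_swap g (i0 i1 : 'I_m) : i0 != i1 ->
  \det (\matrix_r g (tperm i0 i1 r)) = - \det (\matrix_r g r).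
Proof. by move=> ne; rewrite det_rows_perm odd_tperm ne expr1 mulN1r. Qed.

Lemma det_rows_eq0 g (i0 i1 : 'I_m) : i0 != i1 -> g i0 = g i1 ->
  \det (\matrix_r g r) = 0.
Proof. by move=> ne e; apply: (determinant_alternate ne) => c; rewrite !mxE e. Qed.

Lemma det_rows_sum g (i0 : 'I_m) (I : finType) (w : I -> R) (v : I -> 'rV[R]_m) :
  g i0 = \sum_a w a *: v a ->
  \det (\matrix_r g r) = \sum_a w a * \det (\matrix_r [eta g with i0 |-> v a] r).
Proof.
move=> g_i0; rewrite (expand_det_row _ i0).
have cof_upd u j : cofactor (\matrix_r [eta g with i0 |-> u] r) i0 j
                 = cofactor (\matrix_r g r) i0 j.
  congr (_ * \det _); apply/matrixP => r s.
  by rewrite !mxE /= eq_sym (negbTE (neq_lift i0 r)).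
under [RHS]eq_bigr => a _ do rewrite (expand_det_row _ i0) big_distrr.
rewrite exchange_big; apply: eq_bigr => j _ /=.
rewrite mxE g_i0 summxE big_distrl; apply: eq_bigr => a _ /=.
by rewrite cof_upd !mxE eqxx mulrA.
Qed.

Definition minor2 k (X : 'M[R]_(2, k)) (a b : 'I_k) : R := X 0 a * X 1 b - X 0 b * X 1 a.

Lemma row_mulmx_sum k p (X : 'M[R]_(p, k)) (Y : 'M[R]_(k, m)) (i : 'I_p) :
  row i (X *m Y) = \sum_a X i a *: row a Y.
Proof. by rewrite row_mul mulmx_sum_row; apply: eq_bigr => a _; rewrite mxE. Qed.

(* Cauchy-Binet for the two rows i0, i1. *)
Lemma det_rows_mulmx_expand k g (i0 i1 : 'I_m) (X : 'M[R]_(2, k)) (Y : 'M[R]_(k, m)) :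
    i0 != i1 -> g i0 = row 0 (X *m Y) -> g i1 = row 1 (X *m Y) ->
  \det (\matrix_r g r) *+ 2 =
    \sum_a \sum_b minor2 X a b *
      \det (\matrix_r [eta g with i0 |-> row a Y, i1 |-> row b Y] r).
Proof.
move=> ne g_i0 g_i1.
set T := fun a b => \det (\matrix_r [eta g with i0 |-> row a Y, i1 |-> row b Y] r).
have T_swap a b : T b a = - T a b.
  rewrite /T -(det_rows_swap _ ne); congr (\det _); apply/matrixP => r s.
  rewrite !mxE permE /=.
  have [_|ne0] := eqVneq r i0; first by rewrite eq_sym (negbTE ne) eqxx.
  have [_|ne1] := eqVneq r i1; first by rewrite eqxx.
  by rewrite (negbTE ne0) (negbTE ne1).
have expand : \det (\matrix_r g r) = \sum_a \sum_b X 0 a * X 1 b * T a b.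
  rewrite (det_rows_sum (i0 := i0) (w := X 0) (v := fun a => row a Y)); last first.
    by rewrite g_i0 row_mulmx_sum.
  apply: eq_bigr => a _.
  rewrite (det_rows_sum (i0 := i1) (w := X 1) (v := fun a => row a Y)); last first.
    by rewrite /= eq_sym (negbTE ne) g_i1 row_mulmx_sum.
  rewrite big_distrr; apply: eq_bigr => b _ /=; rewrite mulrA /T; congr (_ * \det _).
  apply/matrixP => r s; rewrite !mxE /=.
  by case: (eqVneq r i1) => [->|]; rewrite ?(negbTE ne) // eq_sym (negbTE ne).
have expand_swapped : \sum_a \sum_b X 0 a * X 1 b * T a b
                     = - \sum_a \sum_b X 0 b * X 1 a * T a b.
  rewrite exchange_big -sumrN; apply: eq_bigr => a _.
  by rewrite -sumrN; apply: eq_bigr => b _; rewrite T_swap mulrN.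
rewrite expand mulr2n {2}expand_swapped -sumrB; apply: eq_bigr => a _.
by rewrite -sumrB; apply: eq_bigr => b _; rewrite /minor2 mulrBl.
Qed.

End RowFamilyDeterminant.

Lemma det_mx22 (R : comPzRingType) (A : 'M[R]_2) : \det A = A 0 0 * A 1 1 - A 0 1 * A 1 0.
Proof.
rewrite (expand_det_row _ 0) !big_ord_recl big_ord0 /cofactor !det_mx11 !mxE /=.
rewrite expr0 expr1 mul1r addr0 mulN1r mulrN.
by congr (A _ _ * A _ _ - A _ _ * A _ _); apply: val_inj.
Qed.

Lemma det_eq0_rank (R : fieldType) m (A : 'M[R]_m) : (\rank A < m)%N -> \det A = 0.
Proof.
move=> lt; apply/eqP; apply: contraTT lt => nz.
by rewrite mxrank_unit ?ltnn // unitmxE unitfE.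
Qed.

Lemma col_mx_rows4 (R : nmodType) (u : 'M[R]_(2, 4)) (x y : 'rV[R]_4) :
  col_mx u (col_mx x y) = \matrix_(r < 4) [:: row 0 u; row 1 u; x; y]`_r.
Proof.
apply/matrixP => r s; rewrite !mxE; case: (splitP r) => [r1 e|r1 e]; rewrite ?mxE.
  by rewrite e; case: r1 {e} => [[|[|//]] lt] /=;
    rewrite mxE; congr (u _ s); exact: val_inj.
by case: (splitP r1) => [r2 e2|r2 e2]; rewrite e e2 (ord1 r2).
Qed.

Section Minor2.
Variables (R : numFieldType) (k : nat).
Implicit Types (X : 'M[R]_(2, k)) (a b : 'I_k).

Lemma minor2_antisym X a b : minor2 X b a = - minor2 X a b.
Proof. by rewrite /minor2 opprB. Qed.

Lemma minor2_diag X a : minor2 X a a = 0.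
Proof. exact: subrr. Qed.

Lemma row_free_minor2 X :
  row_free X -> [exists a : 'I_k, exists b : 'I_k, (a < b)%N && (minor2 X a b != 0)].
Proof.
move=> /row_freeP[Y XY1]; apply/contraT; rewrite negb_exists => /forallP all0.
have minor2_eq0 a b : minor2 X a b = 0.
  have lt_eq0 (c d : 'I_k) : (c < d)%N -> minor2 X c d = 0.
    move=> cd; move: (all0 c); rewrite negb_exists => /forallP/(_ d).
    by rewrite cd negbK => /eqP.
  case: (ltngtP a b) => [ab|ba|/val_inj->]; first exact: lt_eq0.
    by rewrite minor2_antisym lt_eq0 ?oppr0.
  exact: minor2_diag.
(* Expand det (X *m Y) = 1 along the Pluecker coordinates of X. *)
have := det_rows_mulmx_expand (g := fun r => row r (X *m Y)) (i0 := 0) (i1 := 1)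
  isT erefl erefl.
have -> : \matrix_r row r (X *m Y) = X *m Y by apply/matrixP => r s; rewrite !mxE.
rewrite XY1 det1 big1 => [/eqP|a _]; first by rewrite pnatr_eq0.
by rewrite big1 // => b _; rewrite minor2_eq0 mul0r.
Qed.

End Minor2.

Section CyclicIndices.
Variable n : nat.
Implicit Types k : 'I_n.

Lemma ordS_val k : ordS k = (if (k.+1 < n)%N then k.+1 else 0%N) :> nat.
Proof.
rewrite /=; case: ifP => [lt|ge]; first by rewrite modn_small.
have -> : k.+1 = n by move: ge (ltn_ord k); lia.
by rewrite modnn.
Qed.

Lemma ord_pred_val k : ord_pred k = (if k == 0 :> nat then n.-1 else k.-1) :> nat.
Proof.
have := ltn_ord k; rewrite /=; case: eqP => [-> lt|k0 lt].
  by rewrite add0n modn_small //; lia.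
have -> : (k + n).-1 = k.-1 + n by move: k0; lia.
by rewrite modnDr modn_small //; lia.
Qed.

Lemma uniq_neighbours k : (3 <= n)%N -> uniq [:: ord_pred k; k; ordS k].
Proof.
move=> n3; have := ltn_ord k; rewrite /= !inE -!(inj_eq (@ord_inj n)) ord_pred_val ordS_val.
by case: ifP; case: ifP; lia.
Qed.

End CyclicIndices.

Lemma pair_meets_three (T : eqType) (a b p i q j j' : T) :
    uniq [:: p; i; q] -> j \notin [:: p; i; q] -> j' \notin [:: p; i; q] ->
    (a \in [:: p; i]) || (b \in [:: p; i]) -> (a \in [:: i; q]) || (b \in [:: i; q]) ->
    (a \in [:: j; j']) || (b \in [:: j; j']) ->
  (a == i) && (b \notin [:: p; q]) || (b == i) && (a \notin [:: p; q]).
Proof.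
rewrite /= !inE !negb_or andbT => /andP[/andP[pi pq] iq] /and3P[jp ji jq] /and3P[j'p j'i j'q].
have only_i x : (x == p) || (x == i) -> (x == i) || (x == q) -> x == i.
  by case/orP => /eqP-> //; rewrite (negbTE pi) (negbTE pq).
have outside x : (x == j) || (x == j') -> [&& x != p, x != i & x != q].
  by case/orP => /eqP->; apply/and3P.
move=> hpi hiq /orP[/outside/and3P[ap ai aq] | /outside/and3P[bp bi bq]].
  by rewrite (negbTE ap) (negbTE ai) (negbTE aq) /= in hpi hiq *; rewrite only_i.
by rewrite (negbTE bp) (negbTE bi) (negbTE bq) !orbF /= in hpi hiq *; rewrite only_i.
Qed.

Section Minor4.
Variables (R : comPzRingType) (n : nat) (Z : 'M[R]_(n, 4)).
Implicit Types (a b c d : 'I_n).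

Definition minor4 a b c d : R :=
  \det (\matrix_(r < 4) [:: row a Z; row b Z; row c Z; row d Z]`_r).

Lemma minor4_swap01 a b c d : minor4 b a c d = - minor4 a b c d.
Proof.
rewrite /minor4 -(@det_rows_swap _ _ _ 0 1) //; congr (\det _).
by apply/matrixP => r s; rewrite !mxE permE; case: r => [[|[|[|[|//]]]] lt].
Qed.

Lemma minor4_swap12 a b c d : minor4 a c b d = - minor4 a b c d.
Proof.
rewrite /minor4 -(@det_rows_swap _ _ _ 1 2) //; congr (\det _).
by apply/matrixP => r s; rewrite !mxE permE; case: r => [[|[|[|[|//]]]] lt].
Qed.

Lemma minor4_swap23 a b c d : minor4 a b d c = - minor4 a b c d.
Proof.
rewrite /minor4 -(@det_rows_swap _ _ _ 2 3) //; congr (\det _).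
by apply/matrixP => r s; rewrite !mxE permE; case: r => [[|[|[|[|//]]]] lt].
Qed.

Lemma minor4_eq0 a b c d :
  (a \in [:: c; d]) || (b \in [:: c; d]) -> minor4 a b c d = 0.
Proof.
rewrite !inE => /orP[] /orP[] /eqP->.
- exact: (@det_rows_eq0 _ _ _ 0 2).
- exact: (@det_rows_eq0 _ _ _ 0 3).
- exact: (@det_rows_eq0 _ _ _ 1 2).
- exact: (@det_rows_eq0 _ _ _ 1 3).
Qed.

End Minor4.

Section Brackets.
Variables (R : realType) (n : nat) (Z : 'M[R]_(n, 4)).
Implicit Types (W : 'M[R]_(2, 4)) (X : 'M[R]_(2, n)) (a b c d : 'I_n).

Lemma minor4_gt0 a b c d : totally_positive Z ->
  (a < b)%N -> (b < c)%N -> (c < d)%N -> 0 < minor4 Z a b c d.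
Proof.
move=> TP ab bc cd.
have -> : minor4 Z a b c d = \det (rowsub (fun r : 'I_4 => nth a [:: a; b; c; d] r) Z).
  rewrite /minor4; congr (\det _); apply/matrixP => r s; rewrite !mxE.
  by case: r => [[|[|[|[|//]]]] lt] /=; rewrite mxE.
apply: TP => r r'.
by case: r => [[|[|[|[|//]]]] ?]; case: r' => [[|[|[|[|//]]]] ?] //= _; lia.
Qed.

Lemma br_mulmx_expand X c d :
  br Z (X *m Z) c d *+ 2 = \sum_a \sum_b minor2 X a b * minor4 Z a b c d.
Proof.
rewrite /br col_mx_rows4.
rewrite (det_rows_mulmx_expand (i0 := 0) (i1 := 1) (X := X) (Y := Z)
  (g := fun r => [:: row 0 (X *m Z); row 1 (X *m Z); row c Z; row d Z]`_r)) //.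
apply: eq_bigr => a _; apply: eq_bigr => b _; congr (_ * \det _).
by apply/matrixP => r s; rewrite !mxE; case: r => [[|[|[|[|//]]]] lt] /=.
Qed.

Lemma br_mulmx_l (M : 'M[R]_2) W c d : br Z (M *m W) c d = \det M * br Z W c d.
Proof.
rewrite /br; have -> : col_mx (M *m W) (col_mx (row c Z) (row d Z))
          = block_mx M 0 0 1%:M *m col_mx W (col_mx (row c Z) (row d Z)).
  by rewrite mul_block_col !mul0mx mul1mx add0r addr0.
by rewrite det_mulmx det_ublock det1 mulr1.
Qed.

Lemma br_in_plane W (i c d : 'I_n) : (W <= plane3 Z i)%MS ->
  c \in [:: ord_pred i; i; ordS i] -> d \in [:: ord_pred i; i; ordS i] ->
  br Z W c d = 0.
Proof.
move=> sWP c_in d_in; apply: det_eq0_rank.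
have rows_in e : e \in [:: ord_pred i; i; ordS i] -> (row e Z <= plane3 Z i)%MS.
  have /and3P[sp si sq] : [&& row (ord_pred i) Z <= plane3 Z i,
      row i Z <= plane3 Z i & row (ordS i) Z <= plane3 Z i]%MS.
    by rewrite -!col_mx_sub; exact: submx_refl.
  by rewrite !inE => /or3P[] /eqP->.
have sub : (col_mx W (col_mx (row c Z) (row d Z)) <= plane3 Z i)%MS.
  by rewrite !col_mx_sub sWP !rows_in.
by rewrite ltnS; apply: leq_trans (mxrankS sub) (rank_leq_row _).
Qed.

Lemma br_meets_line W (j : 'I_n) : (W :&: line2 Z j)%MS != 0 -> br Z W j (ordS j) = 0.
Proof.
move=> meet; apply: det_eq0_rank; rewrite -(addsmxE W (line2 Z j)).1.
have := mxrank_sum_cap W (line2 Z j); have := rank_leq_row W.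
have := rank_leq_row (line2 Z j); rewrite -mxrank_eq0 -lt0n in meet.
by move: meet; lia.
Qed.

(* Sorting a, b, k, k+1 moves the adjacent pair k, k+1 as a block, an even
   permutation, unless the pair wraps around as n-1, 0. *)
Lemma minor4_consecutive_sign k a b : totally_positive Z -> (a < b)%N ->
    a \notin [:: k; ordS k] -> b \notin [:: k; ordS k] ->
  0 < (-1) ^+ (n <= k.+1)%N * minor4 Z a b k (ordS k).
Proof.
move=> TP ab; rewrite !inE !negb_or -!(inj_eq (@ord_inj n)) leqNgt.
have := ordS_val k; move: (ordS k) => k' Ek' /andP[ak ak'] /andP[bk bk'].
have := ltn_ord b; case: ifP Ek' => [lt|ge] Ek' bn.
- rewrite /= expr0 mul1r; case: (ltnP b k) => [b_lt|b_ge].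
    by apply: minor4_gt0 => //; lia.
  case: (ltnP a k) => [a_lt|a_ge].
    by rewrite minor4_swap12 minor4_swap23 opprK; apply: minor4_gt0 => //; lia.
  rewrite minor4_swap12 minor4_swap23 minor4_swap01 minor4_swap12 !opprK.
  by apply: minor4_gt0 => //; lia.
- rewrite /= expr1 mulN1r minor4_swap23 minor4_swap12 minor4_swap01 !opprK.
  by apply: minor4_gt0 => //; lia.
Qed.

(* With i among a, b, sorting a, b, i-1, i+1 is an odd permutation, except
   when i-1 or i+1 wraps around. *)
Lemma minor4_neighbours_sign i a b : totally_positive Z -> (3 <= n)%N -> (a < b)%N ->
    (a == i) && (b \notin [:: ord_pred i; ordS i])
    || (b == i) && (a \notin [:: ord_pred i; ordS i]) ->
  0 < (-1) ^+ ((0 < i) && (i.+1 < n))%N * minor4 Z a b (ord_pred i) (ordS i).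
Proof.
move=> TP n3 ab; rewrite !inE !negb_or -!(inj_eq (@ord_inj n)).
have := ord_pred_val i; have := ordS_val i; move: (ord_pred i) (ordS i) => p q Eq Ep.
have := ltn_ord b; have [interior|boundary] := boolP ((0 < i) && (i.+1 < n))%N => bn.
- rewrite expr1 mulN1r => /orP[/and3P[/eqP ai bp bq]|/and3P[/eqP bi ap aq]].
    rewrite minor4_swap12 minor4_swap23 minor4_swap01 !opprK.
    by apply: minor4_gt0 => //; move: Ep Eq; case: ifP; case: ifP; lia.
  rewrite minor4_swap12 opprK.
  by apply: minor4_gt0 => //; move: Ep Eq; case: ifP; case: ifP; lia.
- rewrite expr0 mul1r => /orP[/and3P[/eqP ai bp bq]|/and3P[/eqP bi ap aq]].
    rewrite minor4_swap23 minor4_swap12 opprK.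
    by apply: minor4_gt0 => //; move: Ep Eq; case: ifP; case: ifP; lia.
  rewrite minor4_swap23 minor4_swap12 minor4_swap01 minor4_swap23 !opprK.
  by apply: minor4_gt0 => //; move: Ep Eq; case: ifP; case: ifP; lia.
Qed.

End Brackets.

Section PlueckerSupport.
Variables (R : realType) (n : nat) (Z : 'M[R]_(n, 4)) (X : 'M[R]_(2, n)).
Hypotheses (TP : totally_positive Z) (GX : Gr_nonneg X).
Implicit Types (a b c d : 'I_n).

Lemma minor2_ge0 a b : (a < b)%N -> 0 <= minor2 X a b.
Proof.
move=> ab; have := GX.2 (fun r : 'I_2 => nth a [:: a; b] r).
rewrite det_mx22 !mxE; apply.
by case=> [[|[|//]] ?] [[|[|//]] ?].
Qed.

Lemma minor4_sign_support_eq0 c d (sigma : R) : br Z (X *m Z) c d = 0 ->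
    (forall a b, (a < b)%N -> minor2 X a b != 0 -> 0 <= sigma * minor4 Z a b c d) ->
  forall a b, (a < b)%N -> minor2 X a b != 0 -> sigma * minor4 Z a b c d = 0.
Proof.
move=> br0 sign_ok a b ab nz.
(* The terms F a b are nonnegative and sum to sigma * 2 <XZ c d> = 0. *)
pose F a b := minor2 X a b * (sigma * minor4 Z a b c d).
have F_ge0 a' b' : 0 <= F a' b'.
  have F_lt a'' b'' : (a'' < b'')%N -> 0 <= F a'' b''.
    move=> lt; rewrite /F.
    have [->|nz'] := eqVneq (minor2 X a'' b'') 0; first by rewrite mul0r.
    by apply: mulr_ge0; [exact: minor2_ge0 | exact: sign_ok].
  case: (ltngtP a' b') => [|ba|/val_inj->]; first exact: F_lt.
    by rewrite /F minor2_antisym minor4_swap01 !mulrN mulNr opprK; exact: F_lt.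
  by rewrite /F minor2_diag mul0r.
have F_sum : \sum_(p : 'I_n * 'I_n) F p.1 p.2 = 0.
  rewrite -pair_bigA; transitivity (sigma * (br Z (X *m Z) c d *+ 2)).
    rewrite br_mulmx_expand mulr_sumr; apply: eq_bigr => a' _.
    by rewrite mulr_sumr; apply: eq_bigr => b' _; rewrite /F mulrCA.
  by rewrite br0 mul0rn mulr0.
have /(_ (a, b) isT)/eqP := psumr_eq0P (fun p _ => F_ge0 p.1 p.2) F_sum.
by rewrite mulf_eq0 (negbTE nz) => /eqP.
Qed.

Lemma support_meets_consecutive k : br Z (X *m Z) k (ordS k) = 0 ->
  forall a b, (a < b)%N -> minor2 X a b != 0 ->
  (a \in [:: k; ordS k]) || (b \in [:: k; ordS k]).
Proof.
move=> br0 a b ab nz; apply/contraT; rewrite negb_or => /andP[a_out b_out].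
have sign_ok a' b' : (a' < b')%N -> minor2 X a' b' != 0 ->
    0 <= (-1) ^+ (n <= k.+1)%N * minor4 Z a' b' k (ordS k).
  move=> lt _; have [meet|] := boolP ((a' \in [:: k; ordS k]) || (b' \in [:: k; ordS k])).
    by rewrite minor4_eq0 ?mulr0.
  by rewrite negb_or => /andP[a'_out b'_out]; apply/ltW/minor4_consecutive_sign.
have /eqP := minor4_sign_support_eq0 br0 sign_ok ab nz.
by rewrite (gt_eqF (minor4_consecutive_sign TP ab a_out b_out)).
Qed.

Lemma support_neighbours_empty i : (3 <= n)%N ->
    br Z (X *m Z) (ord_pred i) (ordS i) = 0 ->
    (forall a b, (a < b)%N -> minor2 X a b != 0 ->
       (a == i) && (b \notin [:: ord_pred i; ordS i])
       || (b == i) && (a \notin [:: ord_pred i; ordS i])) ->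
  forall a b, (a < b)%N -> minor2 X a b = 0.
Proof.
move=> n3 br0 supp a b ab; apply/eqP/contraT => nz.
have sign_ok a' b' (lt : (a' < b')%N) nz' :=
  ltW (minor4_neighbours_sign TP n3 lt (supp a' b' lt nz')).
have /eqP := minor4_sign_support_eq0 br0 sign_ok ab nz.
by rewrite (gt_eqF (minor4_neighbours_sign TP n3 ab (supp a b ab nz))).
Qed.

End PlueckerSupport.

Theorem lemma4p5 (R : realType) (n : nat) (Z : 'M[R]_(n, 4)) :
  (5 <= n)%N ->
  totally_positive Z ->
  assumptionG Z ->
  forall i j : 'I_n,
    [disjoint [set ord_pred i; i; ordS i] & [set j; ordS j]] ->
    forall W : 'M[R]_(2, 4),
      in_amplituhedron Z W ->
      ~ ((W <= plane3 Z i)%MS /\ (W :&: line2 Z j)%MS != 0).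
Proof.
move=> n5 TP _ i j disj W [_ [X [GX /andP[_ /submxP[M XZ]]]]] [W_plane W_line].
have brX c d : br Z W c d = 0 -> br Z (X *m Z) c d = 0.
  by move=> br0; rewrite XZ br_mulmx_l br0 mulr0.
have in_plane c d : c \in [:: ord_pred i; i; ordS i] -> d \in [:: ord_pred i; i; ordS i] ->
    br Z (X *m Z) c d = 0.
  by move=> c_in d_in; apply/brX/(br_in_plane W_plane).
have j_out x : x \in [set j; ordS j] -> x \notin [:: ord_pred i; i; ordS i].
  by move=> xJ; have := disjointFl disj xJ; rewrite !inE -orbA => ->.
have n3 : (3 <= n)%N by apply: leq_trans n5.
have supp (a b : 'I_n) : (a < b)%N -> minor2 X a b != 0 ->
    (a == i) && (b \notin [:: ord_pred i; ordS i])
    || (b == i) && (a \notin [:: ord_pred i; ordS i]).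
  move=> ab nz; apply: (pair_meets_three (j := j) (j' := ordS j)).
  - exact: uniq_neighbours.
  - by apply: j_out; rewrite !inE eqxx.
  - by apply: j_out; rewrite !inE eqxx orbT.
  - have := support_meets_consecutive TP GX (k := ord_pred i); rewrite ord_predK.
    by apply=> //; apply: in_plane; rewrite !inE eqxx ?orbT.
  - apply: (support_meets_consecutive TP GX) => //.
    by apply: in_plane; rewrite !inE eqxx ?orbT.
  - by apply: (support_meets_consecutive TP GX) => //; apply/brX/br_meets_line.
have minor2_eq0 := support_neighbours_empty TP GX n3
  (in_plane _ _ (mem_head _ _) (mem_last _ _)) supp.
have freeX : row_free X by rewrite /row_free GX.1.
have /existsP[a /existsP[b /andP[ab]]] := row_free_minor2 freeX.
by rewrite minor2_eq0 ?eqxx.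
Qed.
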